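(* Let $b=1/2$, let $\mathcal B$ be a Hamel basis of $\mathbb{R}$ over $\mathbb{Q}$ with $b\in\mathcal B$, and let $\pi:\mathbb{R}\to[0,1]$ be defined by $\pi(x)=\lambda^x_b-\lfloor\lambda^x_b\rfloor$ if $\lambda^x_b$ is not an odd integer, and $\pi(x)=1$ if $\lambda^x_b$ is an odd integer. Then $\pi$ is a minimal valid function for $I_b$. Equivalently, $\pi\ge 0$ and: (i) $\pi(x)+\pi(y)\ge\pi(x+y)$ for all $x,y\in\mathbb{R}$; (ii) $\pi(x)+\pi(b-x)=1$ for all $x\in\mathbb{R}$; (iii) $\pi(z)=0$ for all $z\in\mathbb{Z}$.
   Context: For $b\in\mathbb{R}\setminus\mathbb{Z}$, $I_b$ is the set of finite-support functions $y:\mathbb{R}\to\mathbb{Z}_+$ (i.e. $y(x)=0$ for all but finitely many $x$) such that $\sum_{x\in\mathbb{R}} y(x)\,x\equiv b \pmod 1$. A function $\pi:\mathbb{R}\to\mathbb{R}_+$ is a (nonnegative) valid function for $I_b$ if $\sum_{x\in\mathbb{R}}\pi(x)y(x)\ge 1$ for every $y\in I_b$. A valid function $\pi':\mathbb{R}\to\mathbb{R}_+$ dominates a valid function $\pi:\mathbb{R}\to\mathbb{R}_+$ if $\pi'\ne\pi$ and $\pi'\le\pi$ pointwise; a valid function $\pi:\mathbb{R}\to\mathbb{R}_+$ is minimal if it is not dominated by any valid function $\mathbb{R}\to\mathbb{R}_+$. (By Gomory–Johnson, a function $\pi:\mathbb{R}\to\mathbb{R}_+$ is minimal iff it satisfies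 (i), (ii), (iii).) A Hamel basis is a basis of $\mathbb{R}$ as a vector space over $\mathbb{Q}$; for $x\in\mathbb{R}$, $\lambda^x_b\in\mathbb{Q}$ denotes the coefficient of the basis element $b$ in the unique expression of $x$ as a finite rational linear combination of elements of $\mathcal B$. *)

From Stdlib Require Import Reals Lra Lia ZArith QArith Qround Qreals List.
Import ListNotations.
Open Scope R_scope.

Definition lincomb (l : list (R * Q)) : R :=
  fold_right (fun p acc => Q2R (snd p) * fst p + acc) 0 l.

Definition in_basis (B : R -> Prop) (l : list (R * Q)) : Prop :=
  forall p, In p l -> B (fst p).

Definition hamel_basis (B : R -> Prop) : Prop :=
  (forall l : list (R * Q),
      in_basis B l -> NoDup (map fst l) -> lincomb l = 0 ->
      forall p, In p l -> (snd p == 0)%Q) /\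
  (forall x : R, exists l : list (R * Q), in_basis B l /\ x = lincomb l).

Definition coef_in (e : R) (l : list (R * Q)) : Q :=
  fold_right (fun p acc => if Req_EM_T (fst p) e then (snd p + acc)%Q else acc) 0%Q l.

(* q is the coefficient lambda^x_e of e in the (unique) expansion of x in B. *)
Definition hamel_coef (B : R -> Prop) (e x : R) (q : Q) : Prop :=
  exists l : list (R * Q), in_basis B l /\ NoDup (map fst l) /\
    x = lincomb l /\ coef_in e l == q.

Definition Q_odd_integer (q : Q) : bool :=
  Qeq_bool (inject_Z (Qfloor q)) q && Z.odd (Qfloor q).

Definition pi_of (lam : R -> Q) (x : R) : R :=
  if Q_odd_integer (lam x) then 1 else Q2R (lam x - inject_Z (Qfloor (lam x))).

Definition covers_support (y : R -> nat) (l : list R) : Prop :=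
  NoDup l /\ forall x, y x <> 0%nat -> In x l.

Definition sumR (l : list R) (f : R -> R) : R :=
  fold_right (fun x acc => f x + acc) 0 l.

Definition in_Ib (b : R) (y : R -> nat) : Prop :=
  exists l, covers_support y l /\
    exists k : Z, sumR l (fun x => INR (y x) * x) - b = IZR k.

Definition valid_fn (b : R) (pi : R -> R) : Prop :=
  (forall x, 0 <= pi x) /\
  forall y, in_Ib b y -> forall l, covers_support y l ->
    sumR l (fun x => pi x * INR (y x)) >= 1.

Definition dominates (b : R) (pi' pi : R -> R) : Prop :=
  valid_fn b pi' /\ pi' <> pi /\ forall x, pi' x <= pi x.

Definition minimal_fn (b : R) (pi : R -> R) : Prop :=
  valid_fn b pi /\ ~ (exists pi', dominates b pi' pi).

(** The coefficient map [x |-> lam x] of a Hamel basis element is additive,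
    sends an integer [z] to [2 z] (since [z = 2 z * (1/2)]) and [1/2 - x] to
    [1 - lam x].  Hence [pi] is the one-dimensional function [f] on [Q] given
    by the fractional part, corrected to [1] on odd integers, composed with
    an additive map.  The function [f] is subadditive, satisfies
    [f q + f (1 - q) = 1], and vanishes on even integers, so [pi] satisfies
    the Gomory–Johnson conditions (i)–(iii); these imply minimality for any
    right-hand side [b]: subadditivity gives validity, and the symmetry
    condition pinned against the two-point solutions [x + (b - x) = b] of a
    dominating valid function forces equality. *)

From Stdlib Require Import Reals Lra Lia ZArith QArith Qround Qreals List
  Permutation FunctionalExtensionality.
Import ListNotations.
Open Scope R_scope.

Definition odd_frac (q : Q) : R :=
  if Q_odd_integer q then 1 else Q2R (q - inject_Z (Qfloor q)).

Lemma Q2R_inject_Z (z : Z) : Q2R (inject_Z z) = IZR z.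
Proof. unfold Q2R, inject_Z; simpl. rewrite Rinv_1. ring. Qed.

Lemma Q2R_int_frac_split (q : Q) :
  exists m t, Q2R q = IZR m + t /\ 0 <= t < 1.
Proof.
  exists (Qfloor q), (Q2R q - IZR (Qfloor q)).
  pose proof (Qle_Rle _ _ (Qfloor_le q)) as Hle.
  pose proof (Qlt_Rlt _ _ (Qlt_floor q)) as Hlt.
  rewrite Q2R_inject_Z in Hle, Hlt. rewrite plus_IZR in Hlt. split; lra.
Qed.

Lemma odd_frac_split (q : Q) (m : Z) (t : R) :
  Q2R q = IZR m + t -> 0 <= t < 1 ->
  odd_frac q = if Req_EM_T t 0 then (if Z.odd m then 1 else 0) else t.
Proof.
  intros Hq Ht.
  assert (Hfloor : Qfloor q = m).
  { pose proof (Qle_Rle _ _ (Qfloor_le q)) as Hle.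
    pose proof (Qlt_Rlt _ _ (Qlt_floor q)) as Hlt.
    rewrite Q2R_inject_Z in Hle, Hlt. rewrite plus_IZR in Hlt.
    assert (IZR (Qfloor q) < IZR (m + 1)) as H1 by (rewrite plus_IZR; lra).
    assert (IZR m < IZR (Qfloor q + 1)) as H2 by (rewrite plus_IZR; lra).
    apply lt_IZR in H1. apply lt_IZR in H2. lia. }
  unfold odd_frac, Q_odd_integer. rewrite Hfloor.
  destruct (Req_EM_T t 0) as [Ht0 | Ht0].
  - assert (Qeq_bool (inject_Z m) q = true) as ->.
    { apply Qeq_bool_iff, eqR_Qeq. rewrite Q2R_inject_Z. lra. }
    simpl. destruct (Z.odd m); [reflexivity|].
    rewrite Q2R_minus, Q2R_inject_Z. lra.
  - assert (Qeq_bool (inject_Z m) q = false) as ->.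
    { destruct (Qeq_bool (inject_Z m) q) eqn:E; [|reflexivity].
      apply Qeq_bool_iff, Qeq_eqR in E. rewrite Q2R_inject_Z in E. lra. }
    simpl. rewrite Q2R_minus, Q2R_inject_Z. lra.
Qed.

Lemma odd_frac_bounds (q : Q) (m : Z) (t : R) :
  Q2R q = IZR m + t -> 0 <= t < 1 -> t <= odd_frac q <= 1.
Proof.
  intros Hq Ht. rewrite (odd_frac_split q m t Hq Ht).
  destruct (Req_EM_T t 0); [destruct (Z.odd m)|]; lra.
Qed.

Lemma odd_frac_ge0 (q : Q) : 0 <= odd_frac q.
Proof.
  destruct (Q2R_int_frac_split q) as [m [t [Hq Ht]]].
  pose proof (odd_frac_bounds q m t Hq Ht). lra.
Qed.

Lemma odd_frac_Qeq (p q : Q) : (p == q)%Q -> odd_frac p = odd_frac q.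
Proof.
  intros Hpq. destruct (Q2R_int_frac_split q) as [m [t [Hq Ht]]].
  rewrite (odd_frac_split q m t Hq Ht).
  apply odd_frac_split; [rewrite (Qeq_eqR _ _ Hpq)|]; assumption.
Qed.

Lemma odd_frac_subadditive (p q : Q) : odd_frac (p + q) <= odd_frac p + odd_frac q.
Proof.
  destruct (Q2R_int_frac_split p) as [m1 [t1 [Hp Ht1]]].
  destruct (Q2R_int_frac_split q) as [m2 [t2 [Hq Ht2]]].
  pose proof (odd_frac_bounds _ _ _ Hp Ht1).
  pose proof (odd_frac_bounds _ _ _ Hq Ht2).
  destruct (Rlt_le_dec (t1 + t2) 1).
  - assert (Hpq : Q2R (p + q) = IZR (m1 + m2) + (t1 + t2))
      by (rewrite Q2R_plus, plus_IZR; lra).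
    rewrite (odd_frac_split _ _ _ Hpq ltac:(lra)).
    destruct (Req_EM_T (t1 + t2) 0); [|lra].
    (* Both summands are integers: the parities of [m1] and [m2] decide. *)
    assert (t1 = 0) by lra. assert (t2 = 0) by lra. subst.
    rewrite (odd_frac_split _ _ _ Hp Ht1), (odd_frac_split _ _ _ Hq Ht2), Z.odd_add.
    destruct (Req_EM_T 0 0); [|lra].
    destruct (Z.odd m1), (Z.odd m2); simpl; lra.
  - assert (Hpq : Q2R (p + q) = IZR (m1 + m2 + 1) + (t1 + t2 - 1))
      by (rewrite Q2R_plus, !plus_IZR; lra).
    rewrite (odd_frac_split _ _ _ Hpq ltac:(lra)).
    destruct (Req_EM_T (t1 + t2 - 1) 0); [destruct (Z.odd _)|]; lra.
Qed.

Lemma odd_frac_compl (q : Q) : odd_frac q + odd_frac (1 - q) = 1.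
Proof.
  destruct (Q2R_int_frac_split q) as [m [t [Hq Ht]]].
  assert (Q2R 1 = 1) as Hone by (unfold Q2R; simpl; lra).
  rewrite (odd_frac_split _ _ _ Hq Ht).
  destruct (Req_EM_T t 0) as [Ht0 | Ht0].
  - assert (Hq' : Q2R (1 - q) = IZR (1 - m) + 0)
      by (rewrite Q2R_minus, minus_IZR; lra).
    rewrite (odd_frac_split _ _ _ Hq' ltac:(lra)), Z.odd_sub.
    destruct (Req_EM_T 0 0); [|lra].
    destruct (Z.odd m); simpl; lra.
  - assert (Hq' : Q2R (1 - q) = IZR (- m) + (1 - t))
      by (rewrite Q2R_minus, opp_IZR; lra).
    rewrite (odd_frac_split _ _ _ Hq' ltac:(lra)).
    destruct (Req_EM_T (1 - t) 0); lra.
Qed.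

Lemma odd_frac_even (z : Z) : odd_frac (inject_Z (2 * z)) = 0.
Proof.
  assert (Hz : Q2R (inject_Z (2 * z)) = IZR (2 * z) + 0)
    by (rewrite Q2R_inject_Z; lra).
  rewrite (odd_frac_split _ _ _ Hz ltac:(lra)), Z.odd_mul.
  destruct (Req_EM_T 0 0); [reflexivity | lra].
Qed.

(** * Hamel coefficients *)

Lemma lincomb_app (l1 l2 : list (R * Q)) :
  lincomb (l1 ++ l2) = lincomb l1 + lincomb l2.
Proof. induction l1 as [|[r q] l IH]; simpl; [lra|]. rewrite IH; lra. Qed.

Definition lincomb_opp (l : list (R * Q)) : list (R * Q) :=
  map (fun p => (fst p, (- snd p)%Q)) l.

Lemma lincomb_oppE (l : list (R * Q)) : lincomb (lincomb_opp l) = - lincomb l.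
Proof. induction l as [|[r q] l IH]; simpl; [lra|]. rewrite IH, Q2R_opp; lra. Qed.

Lemma lincomb_map (K : list R) (c : R -> Q) :
  lincomb (map (fun e => (e, c e)) K) = sumR K (fun e => Q2R (c e) * e).
Proof. induction K; simpl; [reflexivity|]. rewrite IHK; reflexivity. Qed.

Lemma coef_in_app (e : R) (l1 l2 : list (R * Q)) :
  (coef_in e (l1 ++ l2) == coef_in e l1 + coef_in e l2)%Q.
Proof.
  induction l1 as [|[r q] l IH]; simpl; [ring|].
  destruct (Req_EM_T r e); rewrite IH; ring.
Qed.

Lemma coef_in_opp (e : R) (l : list (R * Q)) :
  (coef_in e (lincomb_opp l) == - coef_in e l)%Q.
Proof.
  induction l as [|[r q] l IH]; simpl; [reflexivity|].
  destruct (Req_EM_T r e); rewrite IH; ring.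
Qed.

Lemma coef_in_notin (e : R) (l : list (R * Q)) :
  ~ In e (map fst l) -> (coef_in e l == 0)%Q.
Proof.
  induction l as [|[r q] l IH]; simpl; intros He; [reflexivity|].
  destruct (Req_EM_T r e); [tauto|]. apply IH; tauto.
Qed.

Lemma in_basis_app (B : R -> Prop) (l1 l2 : list (R * Q)) :
  in_basis B l1 -> in_basis B l2 -> in_basis B (l1 ++ l2).
Proof. intros H1 H2 p Hp. apply in_app_or in Hp as [Hp | Hp]; auto. Qed.

Lemma in_basis_opp (B : R -> Prop) (l : list (R * Q)) :
  in_basis B l -> in_basis B (lincomb_opp l).
Proof.
  intros Hl p Hp. apply in_map_iff in Hp as [p' [<- Hp']]. exact (Hl p' Hp').
Qed.

Lemma sumR_ext (K : list R) (f g : R -> R) :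
  (forall e, f e = g e) -> sumR K f = sumR K g.
Proof. intros Hfg. induction K; simpl; [reflexivity|]. rewrite Hfg, IHK; reflexivity. Qed.

Lemma sumR_add (K : list R) (f g : R -> R) :
  sumR K (fun e => f e + g e) = sumR K f + sumR K g.
Proof. induction K; simpl; [lra|]. rewrite IHK; lra. Qed.

Lemma sumR_indicator (K : list R) (r : R) (g : R -> R) : NoDup K -> In r K ->
  sumR K (fun e => if Req_EM_T r e then g e else 0) = g r.
Proof.
  intros HK Hr.
  assert (Hout : forall K', ~ In r K' ->
            sumR K' (fun e => if Req_EM_T r e then g e else 0) = 0).
  { induction K' as [|a K' IH]; intros Hn; simpl; [reflexivity|].
    destruct (Req_EM_T r a) as [-> | _]; [simpl in Hn; tauto|].
    rewrite IH; [lra | simpl in Hn; tauto]. }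
  induction K as [|a K IH]; [destruct Hr|].
  inversion HK as [|? ? Ha HK']; subst. simpl.
  destruct Hr as [<- | Hr].
  - destruct (Req_EM_T a a); [|congruence]. rewrite Hout; [lra | assumption].
  - destruct (Req_EM_T r a) as [-> | _]; [contradiction|]. rewrite IH; auto; lra.
Qed.

Lemma lincomb_regroup (l : list (R * Q)) (K : list R) : NoDup K ->
  (forall p, In p l -> In (fst p) K) ->
  lincomb l = sumR K (fun e => Q2R (coef_in e l) * e).
Proof.
  intros HK. induction l as [|[r q] l IH]; intros Hl; simpl.
  - clear. induction K as [|a K IH]; simpl; [reflexivity|].
    rewrite IH. unfold Q2R; simpl. lra.
  - rewrite IH by (intros; apply Hl; simpl; auto).
    assert (Hr : In r K) by (apply (Hl (r, q)); simpl; auto).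
    rewrite <- (sumR_indicator K r (fun e => Q2R q * e) HK Hr), <- sumR_add.
    apply sumR_ext. intros e. destruct (Req_EM_T r e); [rewrite Q2R_plus|]; lra.
Qed.

Lemma hamel_coef_in_eq0 (B : R -> Prop) (HB : hamel_basis B) (l : list (R * Q)) :
  in_basis B l -> lincomb l = 0 -> forall e, (coef_in e l == 0)%Q.
Proof.
  intros Hl Hzero e.
  destruct (in_dec Req_EM_T e (map fst l)) as [He | He]; [|apply coef_in_notin, He].
  set (K := nodup Req_EM_T (map fst l)).
  set (l' := map (fun e => (e, coef_in e l)) K).
  assert (HK : NoDup K) by apply NoDup_nodup.
  assert (HlK : forall p, In p l -> In (fst p) K)
    by (intros p Hp; apply nodup_In, in_map, Hp).
  refine (proj1 HB l' _ _ _ (e, coef_in e l) _).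
  - intros p Hp. apply in_map_iff in Hp as [x [<- Hx]].
    apply nodup_In, in_map_iff in Hx as [p [<- Hp]]. exact (Hl p Hp).
  - unfold l'. rewrite map_map. simpl. rewrite map_id. exact HK.
  - unfold l'. rewrite lincomb_map, <- (lincomb_regroup l K HK HlK). exact Hzero.
  - apply (in_map (fun e => (e, coef_in e l))), nodup_In, He.
Qed.

Section HamelCoefficient.

Variables (B : R -> Prop) (e : R) (lam : R -> Q).
Hypotheses (HB : hamel_basis B) (He : B e)
  (Hlam : forall x, hamel_coef B e x (lam x)).

Lemma hamel_coef_of_lincomb (l : list (R * Q)) (x : R) :
  in_basis B l -> lincomb l = x -> (lam x == coef_in e l)%Q.
Proof.
  intros Hl Hx. destruct (Hlam x) as [l1 [Hl1 [_ [Hx1 Hc1]]]].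
  pose proof (hamel_coef_in_eq0 B HB (l ++ lincomb_opp l1)
    (in_basis_app _ _ _ Hl (in_basis_opp _ _ Hl1))
    ltac:(rewrite lincomb_app, lincomb_oppE; lra) e) as Hdiff.
  rewrite coef_in_app, coef_in_opp, Hc1 in Hdiff.
  rewrite <- (Qplus_inj_r _ _ (- lam x)), Qplus_opp_r, Hdiff. reflexivity.
Qed.

Lemma hamel_coefD (x y : R) : (lam (x + y) == lam x + lam y)%Q.
Proof.
  destruct (Hlam x) as [l1 [Hl1 [_ [Hx1 Hc1]]]].
  destruct (Hlam y) as [l2 [Hl2 [_ [Hx2 Hc2]]]].
  rewrite (hamel_coef_of_lincomb (l1 ++ l2) (x + y)).
  - rewrite coef_in_app, Hc1, Hc2. reflexivity.
  - apply in_basis_app; assumption.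
  - rewrite lincomb_app; lra.
Qed.

Lemma hamel_coef_scale (q : Q) : (lam (Q2R q * e) == q)%Q.
Proof.
  rewrite (hamel_coef_of_lincomb [(e, q)]).
  - simpl. destruct (Req_EM_T e e); [ring | congruence].
  - intros p [<- | []]. exact He.
  - simpl. lra.
Qed.

Lemma hamel_coef_compl (x : R) : (lam (e - x) == 1 - lam x)%Q.
Proof.
  assert (Hsum : (lam (e - x) + lam x == 1)%Q).
  { rewrite <- hamel_coefD, <- (hamel_coef_scale 1).
    replace (e - x + x) with (Q2R 1 * e) by (unfold Q2R; simpl; lra). reflexivity. }
  rewrite <- Hsum. ring.
Qed.

End HamelCoefficient.

(** * Subadditive functions and the Gomory–Johnson conditions *)

Lemma sumR_perm (l m : list R) (f : R -> R) : Permutation l m -> sumR l f = sumR m f.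
Proof. induction 1; simpl; lra. Qed.

Definition support_of (y : R -> nat) (l : list R) : list R :=
  filter (fun x => negb (Nat.eqb (y x) 0)) l.

Lemma sumR_support (y : R -> nat) (f : R -> R) (l : list R) :
  (forall x, y x = 0%nat -> f x = 0) -> sumR l f = sumR (support_of y l) f.
Proof.
  intros Hf. induction l as [|a l IH]; simpl; [reflexivity|].
  destruct (Nat.eqb (y a) 0) eqn:Ha; simpl; rewrite IH; [|reflexivity].
  apply Nat.eqb_eq, Hf in Ha. lra.
Qed.

Lemma sumR_covers_support (y : R -> nat) (f : R -> R) (l m : list R) :
  covers_support y l -> covers_support y m ->
  (forall x, y x = 0%nat -> f x = 0) -> sumR l f = sumR m f.
Proof.
  intros [Hl Cl] [Hm Cm] Hf.
  rewrite (sumR_support y f l Hf), (sumR_support y f m Hf).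
  apply sumR_perm, NoDup_Permutation; try (apply NoDup_filter; assumption).
  intros x. unfold support_of. rewrite !filter_In.
  split; intros [_ Hx]; split; auto; (apply Cm || apply Cl);
    intros Hy; rewrite Hy in Hx; discriminate.
Qed.

Section Subadditive.

Variable pi : R -> R.
Hypotheses (pi_subadd : forall x y, pi x + pi y >= pi (x + y)) (pi0 : pi 0 = 0).

Lemma subadditive_natmul (n : nat) (x : R) : pi (INR n * x) <= pi x * INR n.
Proof.
  induction n as [|n IH].
  - simpl. rewrite Rmult_0_l, pi0. lra.
  - rewrite S_INR. replace ((INR n + 1) * x) with (x + INR n * x) by ring.
    pose proof (pi_subadd x (INR n * x)). lra.
Qed.

Lemma subadditive_sumR (y : R -> nat) (l : list R) :
  pi (sumR l (fun x => INR (y x) * x)) <= sumR l (fun x => pi x * INR (y x)).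
Proof.
  induction l as [|a l IH]; simpl; [lra|].
  pose proof (pi_subadd (INR (y a) * a) (sumR l (fun x => INR (y x) * x))).
  pose proof (subadditive_natmul (y a) a). lra.
Qed.

End Subadditive.

Lemma valid_fn_pair (b : R) (pi : R -> R) (x : R) :
  valid_fn b pi -> pi x + pi (b - x) >= 1.
Proof.
  intros [_ Hvalid].
  set (y := fun t => ((if Req_EM_T t x then 1 else 0)
                      + (if Req_EM_T t (b - x) then 1 else 0))%nat).
  destruct (Req_EM_T x (b - x)) as [Hx | Hx].
  - assert (Hyx : y x = 2%nat).
    { unfold y. destruct (Req_EM_T x x); [|congruence].
      destruct (Req_EM_T x (b - x)); [reflexivity | congruence]. }
    assert (Hc : covers_support y [x]).
    { split; [repeat constructor; simpl; tauto|].
      intros t Ht. unfold y in Ht.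
      destruct (Req_EM_T t x) as [-> | ]; [simpl; auto|].
      destruct (Req_EM_T t (b - x)); [congruence | simpl in Ht; lia]. }
    assert (HI : in_Ib b y)
      by (exists [x]; split; [exact Hc | exists 0%Z; simpl; rewrite Hyx; simpl; lra]).
    pose proof (Hvalid y HI [x] Hc) as H. simpl in H. rewrite Hyx in H. simpl in H.
    rewrite <- Hx. lra.
  - assert (Hyx : y x = 1%nat).
    { unfold y. destruct (Req_EM_T x x); [|congruence].
      destruct (Req_EM_T x (b - x)); [congruence | reflexivity]. }
    assert (Hyx' : y (b - x) = 1%nat).
    { unfold y. destruct (Req_EM_T (b - x) x); [congruence|].
      destruct (Req_EM_T (b - x) (b - x)); [reflexivity | congruence]. }
    assert (Hc : covers_support y [x; b - x]).
    { split; [constructor; [simpl; intros [H | []]; auto | repeat constructor; simpl; tauto]|].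
      intros t Ht. unfold y in Ht.
      destruct (Req_EM_T t x); [simpl; auto|].
      destruct (Req_EM_T t (b - x)); [simpl; auto | simpl in Ht; lia]. }
    assert (HI : in_Ib b y).
    { exists [x; b - x]. split; [exact Hc|].
      exists 0%Z. simpl. rewrite Hyx, Hyx'. simpl. lra. }
    pose proof (Hvalid y HI _ Hc) as H. simpl in H. rewrite Hyx, Hyx' in H. simpl in H.
    lra.
Qed.

Lemma minimal_fn_of_gomory_johnson (b : R) (pi : R -> R) :
  (forall x, 0 <= pi x) ->
  (forall x y, pi x + pi y >= pi (x + y)) ->
  (forall x, pi x + pi (b - x) = 1) ->
  (forall z : Z, pi (IZR z) = 0) ->
  minimal_fn b pi.
Proof.
  intros pi_ge0 pi_subadd pi_sym pi_int.
  assert (pi0 : pi 0 = 0) by exact (pi_int 0%Z).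
  split.
  - split; [exact pi_ge0|].
    intros y [l0 [Hl0 [k Hk]]] l Hl.
    rewrite (sumR_covers_support y (fun x => INR (y x) * x) l0 l Hl0 Hl) in Hk
      by (intros x Hx; rewrite Hx; simpl; ring).
    (* pi (b + k) >= pi b - pi (-k) = 1 - pi 0 *)
    pose proof (pi_subadd (sumR l (fun x => INR (y x) * x)) (IZR (- k))) as Hshift.
    replace (sumR l (fun x => INR (y x) * x) + IZR (- k)) with (b - 0) in Hshift
      by (rewrite opp_IZR; lra).
    pose proof (pi_sym 0). rewrite pi_int in Hshift.
    pose proof (subadditive_sumR pi pi_subadd pi0 y l). lra.
  - intros [pi' [Hvalid' [Hneq Hle]]]. apply Hneq, functional_extensionality. intros x.
    pose proof (valid_fn_pair b pi' x Hvalid').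
    pose proof (pi_sym x). pose proof (Hle x). pose proof (Hle (b - x)). lra.
Qed.

Theorem mainTheorem1 (B : R -> Prop) (lam : R -> Q)
  (HB : hamel_basis B) (Hb : B (1/2))
  (Hlam : forall x, hamel_coef B (1/2) x (lam x)) :
  minimal_fn (1/2) (pi_of lam) /\
  (forall x, 0 <= pi_of lam x) /\
  (forall x y, pi_of lam x + pi_of lam y >= pi_of lam (x + y)) /\
  (forall x, pi_of lam x + pi_of lam (1/2 - x) = 1) /\
  (forall z : Z, pi_of lam (IZR z) = 0).
Proof.
  change (pi_of lam) with (fun x => odd_frac (lam x)).
  assert (pi_ge0 : forall x, 0 <= odd_frac (lam x)) by (intros; apply odd_frac_ge0).
  assert (pi_subadd : forall x y, odd_frac (lam x) + odd_frac (lam y) >= odd_frac (lam (x + y))).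
  { intros x y. rewrite (odd_frac_Qeq _ _ (hamel_coefD B (1/2) lam HB Hlam x y)).
    pose proof (odd_frac_subadditive (lam x) (lam y)). lra. }
  assert (pi_sym : forall x, odd_frac (lam x) + odd_frac (lam (1/2 - x)) = 1).
  { intros x. rewrite (odd_frac_Qeq _ _ (hamel_coef_compl B (1/2) lam HB Hb Hlam x)).
    apply odd_frac_compl. }
  assert (pi_int : forall z : Z, odd_frac (lam (IZR z)) = 0).
  { intros z. replace (IZR z) with (Q2R (inject_Z (2 * z)) * (1/2))
      by (rewrite Q2R_inject_Z, mult_IZR; lra).
    rewrite (odd_frac_Qeq _ _ (hamel_coef_scale B (1/2) lam HB Hb Hlam _)).
    apply odd_frac_even. }
  split; [apply minimal_fn_of_gomory_johnson; assumption|].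
  repeat split; assumption.
Qed.
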